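(* Algorithm $R_A$ (described in the context) is group-strategyproof over the domain of all monotonic profiles (for $n$ agents and alternatives $\{A,B\}$) that admit a unique stable assignment.
   Context: Agents $V=\{v_1,\dots,v_n\}$; two alternatives $A,B$. Each agent $v_i$ has a strict total order $\succ_i$ on $\{A,B\}\times\{1,\dots,n\}$, where $(S,j)$ means being in the community adopting $S$ of size $j$; it is monotonic if $(S,j)\succ_i(S,k)$ whenever $k<j$. An assignment is a map $f:V\to\{A,B\}$; $v_i$ prefers $f$ to $g$ if $(f(v_i),|f^{-1}(f(v_i))|)\succ_i(g(v_i),|g^{-1}(g(v_i))|)$. An assignment $f$ is stable if there is no assignment $f'\neq f$ such that every agent $v_i$ with $f'(v_i)\neq f(v_i)$ prefers $f'$ to $f$. Algorithm $R_A$: set $V_A=V$, $V_B=\emptyset$, $a=|V_A|$, $b=|V_B|$. Repeat: let $k$ be the largest $j\in\{1,\dots,a\}$ with $|\{v_i\in V_A:(B,b+j)\succ_i(A,a)\}|\ge j$, or $k=0$ if none exists. If $k=0$, output $f$ with $f^{-1}(A)=V_A$, $f^{-1}(B)=V_B$. Otherwise let $X=\{v_i\in V_A:(B,b+k)\succ_i(A,a)\}$, move $X$ from $V_A$ to $V_B$, update $a,b$, and repeat. A rule $R$ is group-strategyproof over a domain $D$ of profiles if for every $V\in D$ with $f=R(V)$ there is no nonempty set $U\subseteq V$ of agents who can simultaneously replace their orders by monotonic orders, producing a profile $V'$ with $f'=R(V')$, such that every $v_i\in U$ prefers $f'$ to $f$ according to her true order $\succ_i$. *)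

From HB Require Import structures.
From mathcomp Require Import all_boot.
Set Implicit Arguments. Unset Strict Implicit. Unset Printing Implicit Defensive.

Inductive alt := A | B.

Definition alt_eqb (x y : alt) : bool :=
  match x, y with A, A | B, B => true | _, _ => false end.
Lemma alt_eqP : Equality.axiom alt_eqb.
Proof. by case; case; constructor. Qed.
HB.instance Definition _ := hasDecEq.Build alt alt_eqP.

(* An outcome (S, j): being in the community adopting S, of size j. *)
Definition outcome := (alt * nat)%type.

Definition in_dom (n : nat) (x : outcome) : bool := (1 <= x.2 <= n).

(* [ord x y] reads "x is strictly preferred to y". *)
Definition strict_total_order (n : nat) (ord : rel outcome) : Prop :=
  [/\ (forall x, in_dom n x -> ~~ ord x x),
      (forall x y z, in_dom n x -> in_dom n y -> in_dom n z ->
                     ord x y -> ord y z -> ord x z) &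
      (forall x y, in_dom n x -> in_dom n y -> x <> y -> ord x y \/ ord y x)].

Definition monotonic_order (n : nat) (ord : rel outcome) : Prop :=
  strict_total_order n ord /\
  (forall (S : alt) (j k : nat), 1 <= k -> k < j -> j <= n -> ord (S, j) (S, k)).

Definition profile (n : nat) := 'I_n -> rel outcome.

Definition monotonic_profile (n : nat) (P : profile n) : Prop :=
  forall i, monotonic_order n (P i).

Definition assignment (n : nat) := {ffun 'I_n -> alt}.

Definition csize (n : nat) (f : assignment n) (S : alt) : nat :=
  #|[set v | f v == S]|.

Definition outcome_of (n : nat) (f : assignment n) (i : 'I_n) : outcome :=
  (f i, csize f (f i)).

Definition prefers (n : nat) (ord : rel outcome) (i : 'I_n) (f g : assignment n) : bool :=
  ord (outcome_of f i) (outcome_of g i).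

Definition stable (n : nat) (P : profile n) (f : assignment n) : Prop :=
  ~ exists f' : assignment n, f' <> f /\
      (forall i, f' i <> f i -> prefers (P i) i f' f).

Definition unique_stable (n : nat) (P : profile n) : Prop :=
  exists f, stable P f /\ forall g, stable P g -> g = f.

Definition RA_count (n : nat) (P : profile n) (VA : {set 'I_n}) (j : nat) : nat :=
  let a := #|VA| in let b := n - a in
  #|[set i in VA | P i (B, b + j) (A, a)]|.

(* largest j in {1..a} with count >= j, or 0 if none *)
Definition RA_k (n : nat) (P : profile n) (VA : {set 'I_n}) : nat :=
  \max_(j < #|VA|.+1 | (0 < (j : nat)) && (j <= RA_count P VA j)) (j : nat).

Definition RA_step (n : nat) (P : profile n) (VA : {set 'I_n}) : option {set 'I_n} :=
  let k := RA_k P VA in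
  if k == 0 then None
  else let a := #|VA| in let b := n - a in
       Some (VA :\: [set i in VA | P i (B, b + k) (A, a)]).

Fixpoint RA_run (n : nat) (P : profile n) (fuel : nat) (VA : {set 'I_n}) : {set 'I_n} :=
  match fuel with
  | 0 => VA
  | fuel'.+1 => match RA_step P VA with
                | None => VA
                | Some VA' => RA_run P fuel' VA'
                end
  end.

(* Each non-terminal round removes k >= 1 agents from V_A, so at most n
   rounds move agents; fuel n.+1 therefore always reaches the k = 0 exit. *)
Definition R_A (n : nat) (P : profile n) : assignment n :=
  let VA := RA_run P n.+1 [set: 'I_n] in
  [ffun i => if i \in VA then A else B].

Definition group_strategyproof (n : nat) (R : profile n -> assignment n)
    (D : profile n -> Prop) : Prop :=
  forall P : profile n, D P ->
  ~ exists (U : {set 'I_n}) (P' : profile n),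
      [/\ U != set0,
          (forall i, i \notin U -> P' i = P i),
          (forall i, i \in U -> monotonic_order n (P' i)) &
          (forall i, i \in U -> prefers (P i) i (R P') (R P))].

(* R_A always returns a stable assignment: a round moves to B a group
   that prefers the enlarged B-community, which preserves the invariant that
   no group of B-agents would rather join A, and the run stops only when no
   group of A-agents wants to leave.
   Let a coalition U misreport so that every member gains, and let g be the
   (stable) outcome of the misreport.  Along the rounds of R_A on the true
   profile, no agent moved to B can lie in the A-community of g: a member of
   U there would prefer its R_A outcome to g, and if there is none, the honest
   movers would jointly leave A and destabilise g.  So g's A-community lies
   inside that of R_A.  Uniqueness of the stable assignment makes R_A commute
   with exchanging A and B, which bounds g's B-community the same way; hence
   g is the R_A outcome and no member of U gains. *)

From HB Require Import structures.
From mathcomp Require Import all_boot zify.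
Set Implicit Arguments. Unset Strict Implicit. Unset Printing Implicit Defensive.

(* [lia] compares atoms syntactically, and cardinalities elaborated in
   different statements carry distinct universe instances of [reverse_coercion];
   unfolding it makes them coincide. *)
Ltac card_lia := unfold reverse_coercion in *; lia.

Lemma in_domE n (S : alt) j : in_dom n (S, j) = (1 <= j <= n).
Proof. by []. Qed.

Section MonotonicOrder.

Variables (n : nat) (o : rel outcome).
Hypothesis mono : monotonic_order n o.

Lemma monotonic_irrefl x : in_dom n x -> ~~ o x x.
Proof. by case: mono => [[irr _ _] _]; apply: irr. Qed.

Lemma pref_monotone S T j k j' k' : o (S, j) (T, k) ->
  1 <= j -> j <= j' -> j' <= n -> 1 <= k' -> k' <= k -> k <= n ->
  o (S, j') (T, k').
Proof.
case: mono => [[_ trans _] grow] pref j1 jj' j'n k'1 k'k kn.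
have pref_l : o (S, j') (T, k).
  have [lt | <-] : j < j' \/ j = j' by lia.
    by apply: (trans _ _ _ _ _ _ (grow _ _ _ _ _ _) pref); rewrite ?in_domE; lia.
  exact: pref.
have [lt | ->] : k' < k \/ k' = k by lia.
  by apply: (trans _ _ _ _ _ _ pref_l (grow _ _ _ _ _ _)); rewrite ?in_domE; lia.
exact: pref_l.
Qed.

Lemma pref_asym x y : in_dom n x -> in_dom n y -> o x y -> ~~ o y x.
Proof.
case: mono => [[irr trans _] _] dx dy xy; apply/negP => yx.
by have := irr x dx; rewrite (trans x y x).
Qed.

End MonotonicOrder.

Section Assignments.

Variable n : nat.
Implicit Types (F Z : {set 'I_n}) (f g : assignment n) (Q : profile n).

Lemma card_set_le F : #|F| <= n.
Proof. by have := max_card F; rewrite card_ord. Qed.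

Lemma card_setC F : #|~: F| = n - #|F|.
Proof. by have := cardsC F; rewrite card_ord; lia. Qed.

Lemma csizeAB g : csize g A + csize g B = n.
Proof.
rewrite /csize -[in RHS](card_ord n) -(cardsC [set v | g v == A]); congr (_ + _).
by apply: eq_card => i; rewrite !inE; case: (g i).
Qed.

Lemma in_dom_outcome g i : in_dom n (outcome_of g i).
Proof.
by rewrite /in_dom /= card_set_le andbT card_gt0; apply/set0Pn; exists i; rewrite inE.
Qed.

Definition assign_of F : assignment n := [ffun i => if i \in F then A else B].

Lemma outcome_assign_in F i : i \in F -> outcome_of (assign_of F) i = (A, #|F|).
Proof.
move=> iF; rewrite /outcome_of /csize ffunE iF; congr (_, _).
by apply: eq_card => j; rewrite !inE ffunE; case: (j \in F).
Qed.

Lemma outcome_assign_notin F i : i \notin F -> outcome_of (assign_of F) i = (B, n - #|F|).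
Proof.
move=> iF; rewrite /outcome_of /csize ffunE (negbTE iF) -card_setC; congr (_, _).
by apply: eq_card => j; rewrite !inE ffunE; case: (j \in F).
Qed.

Lemma csize_deviation F f :
  csize f A + #|[set i in F | f i == B]| = #|F| + #|[set i in ~: F | f i == A]|.
Proof.
have -> : [set i in F | f i == B] = F :\: [set i | f i == A].
  by apply/setP => i; rewrite !inE; case: (f i); rewrite ?andbT ?andbF.
have -> : [set i in ~: F | f i == A] = [set i | f i == A] :\: F.
  by apply/setP => i; rewrite !inE andbC.
rewrite /csize -(cardsID F [set i | f i == A]) -[in RHS](cardsID [set i | f i == A] F).
by rewrite setIC addnAC.
Qed.

Lemma group_to_B_unstable Q g Z : Z != set0 -> Z \subset [set i | g i == A] ->
  (forall z, z \in Z -> Q z (B, csize g B + #|Z|) (A, csize g A)) -> ~ stable Q g.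
Proof.
move=> Z0 ZA pref; apply; pose g' : assignment n := [ffun i => if i \in Z then B else g i].
have gZ z : z \in Z -> g z = A by move/(subsetP ZA); rewrite inE => /eqP.
have csize_g'B : csize g' B = csize g B + #|Z|.
  rewrite /csize -(cardsID Z [set v | g' v == B]) addnC.
  congr (_ + _); apply: eq_card => v; rewrite !inE ffunE;
    by case: ifP => vZ; rewrite ?andbF //= gZ.
exists g'; split.
  have [z zZ] := set0Pn _ Z0.
  by move/ffunP/(_ z); rewrite ffunE zZ gZ.
move=> i; rewrite ffunE; case: ifP => // iZ _.
by rewrite /prefers /outcome_of ffunE iZ csize_g'B gZ //; apply: pref.
Qed.

End Assignments.

Section Algorithm.

Variables (n : nat) (P : profile n).
Implicit Types (W X : {set 'I_n}).

Definition RA_movers W : {set 'I_n} :=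
  [set i in W | P i (B, n - #|W| + RA_k P W) (A, #|W|)].

Lemma RA_stepE W :
  RA_step P W = if RA_k P W == 0 then None else Some (W :\: RA_movers W).
Proof. by []. Qed.

Lemma RA_movers_sub W : RA_movers W \subset W.
Proof. by apply/subsetP => i; rewrite inE => /andP[]. Qed.

Lemma RA_k_le_movers W : RA_k P W <= #|RA_movers W|.
Proof.
apply: (big_ind (fun m => m <= RA_count P W m)) => [//| x y | j /andP[] //].
by rewrite /maxn; case: ifP.
Qed.

Lemma RA_k_le W : RA_k P W <= #|W|.
Proof. exact: leq_trans (RA_k_le_movers W) (subset_leq_card (RA_movers_sub W)). Qed.

Lemma card_RA_remaining W : #|W :\: RA_movers W| = #|W| - #|RA_movers W|.
Proof. by rewrite cardsD (setIidPr (RA_movers_sub W)). Qed.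

Lemma RA_k_ge_group W X : X != set0 -> X \subset W ->
  (forall x, x \in X -> P x (B, n - #|W| + #|X|) (A, #|W|)) -> #|X| <= RA_k P W.
Proof.
move=> X0 XW pref; have ltX : #|X| < #|W|.+1 by rewrite ltnS subset_leq_card.
apply: (@leq_bigmax_cond _ _ (fun j : 'I_#|W|.+1 => j : nat) (Ordinal ltX)).
rewrite /= card_gt0 X0 /RA_count subset_leq_card //.
by apply/subsetP => x xX; rewrite inE (subsetP XW) ?pref.
Qed.

Lemma RA_run_sub fuel W : RA_run P fuel W \subset W.
Proof.
elim: fuel W => [|fuel IH] W /=; first exact: subxx.
rewrite RA_stepE; case: eqP => _; first exact: subxx.
exact: subset_trans (IH _) (subsetDl _ _).
Qed.

Lemma RA_run_halts fuel W : #|W| < fuel -> RA_k P (RA_run P fuel W) = 0.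
Proof.
elim: fuel W => [|fuel IH] W ltW //.
rewrite /= RA_stepE; case: eqP => [//|/eqP k0]; apply: IH.
have := RA_k_le_movers W; have := RA_k_le W.
by move: k0; rewrite card_RA_remaining -lt0n; card_lia.
Qed.

Lemma RA_run_ind (Inv : {set 'I_n} -> Prop) fuel W : Inv W ->
  (forall W', RA_k P W' != 0 -> RA_run P fuel W \subset W' :\: RA_movers W' ->
     Inv W' -> Inv (W' :\: RA_movers W')) ->
  Inv (RA_run P fuel W).
Proof.
elim: fuel W => [|fuel IH] W InvW //=.
rewrite RA_stepE; case: eqP => [//|/eqP k0] step.
by apply: IH => [|W' k0' sub]; [exact: step k0 (RA_run_sub _ _) InvW | exact: step].
Qed.

Lemma R_AE : R_A P = assign_of (RA_run P n.+1 [set: 'I_n]).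
Proof. by []. Qed.

End Algorithm.

Section Stability.

Variables (n : nat) (P : profile n).
Hypothesis monoP : monotonic_profile P.
Implicit Types (W F S : {set 'I_n}).

Lemma mover_prefers_B W i j l : RA_k P W != 0 -> i \in RA_movers P W ->
  n - #|W| + RA_k P W <= j -> j <= n -> 1 <= l -> l <= #|W| -> P i (B, j) (A, l).
Proof.
move=> k0; rewrite inE => /andP[_ pref] *; apply: (pref_monotone (monoP i) pref).
all: have := RA_k_le P W; have := card_set_le W; move: k0; rewrite -lt0n; card_lia.
Qed.

Definition no_group_joins_A W := forall S, S != set0 -> S \subset ~: W ->
  ~ (forall s, s \in S -> P s (A, #|W| + #|S|) (B, n - #|W|)).

Lemma no_group_joins_A_setT : no_group_joins_A [set: 'I_n].
Proof. by move=> S S0; rewrite setCT subset0 => /eqP S_0; rewrite S_0 eqxx in S0. Qed.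

Lemma no_group_joins_A_step W : RA_k P W != 0 ->
  no_group_joins_A W -> no_group_joins_A (W :\: RA_movers P W).
Proof.
move=> k0 noW S S0 SW' pref.
have SX : S :\: ~: W \subset RA_movers P W.
  apply/subsetP => s /[!inE] /andP[/negbNE sW sS].
  by move: (subsetP SW' s sS); rewrite !inE sW andbT negbK.
have k_pos : 0 < RA_k P W by rewrite lt0n.
have cardS := cardsID (~: W) S.
have cardSX := subset_leq_card SX.
have cardX := subset_leq_card (RA_movers_sub P W).
have kX := RA_k_le_movers P W.
have cardW' := card_RA_remaining P W.
have cardW := card_set_le W.
have cardWC := card_setC W.
have S_pos : 0 < #|S| by rewrite card_gt0.
have [S1_0 | S1n0] := eqVneq (S :&: ~: W) set0.
- have [s sS] := set0Pn _ S0.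
  have sX : s \in RA_movers P W.
    apply: (subsetP SX); rewrite !inE sS andbT; apply/negP => sW.
    by move/setP: S1_0 => /(_ s); rewrite !inE sS sW.
  rewrite S1_0 cards0 in cardS.
  have := pref s sS; apply/negP; apply: (pref_asym (monoP s)); rewrite ?in_domE; try card_lia.
  by apply: (mover_prefers_B k0 sX); card_lia.
- apply: (noW _ S1n0 (subsetIr _ _)) => t /[!inE] /andP[tS tW].
  have WC_pos : 0 < #|~: W| by apply/card_gt0P; exists t; rewrite inE.
  have cardS1 := subset_leq_card (subsetIr S (~: W)).
  by apply: (pref_monotone (monoP t) (pref t tS)); card_lia.
Qed.

Lemma stable_at_fixpoint F : RA_k P F = 0 -> no_group_joins_A F -> stable P (assign_of F).
Proof.
move=> k0 noF [f [ne dev]]; have sizes := csize_deviation F f.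
set X := [set i in F | f i == B] in sizes *; set Y := [set i in ~: F | f i == A] in sizes *.
have XF : X \subset F by apply/subsetP => i; rewrite inE => /andP[].
have YF : Y \subset ~: F by apply/subsetP => i; rewrite inE => /andP[].
have AB := csizeAB f.
have cardX := subset_leq_card XF; have cardY := subset_leq_card YF.
have cardF := card_set_le F; have cardFC := card_setC F.
have devX x : x \in X -> P x (B, csize f B) (A, #|F|).
  rewrite inE => /andP[xF /eqP fx].
  by have := dev x; rewrite /prefers (outcome_assign_in xF) /outcome_of fx ffunE xF; apply.
have devY y : y \in Y -> P y (A, csize f A) (B, n - #|F|).
  rewrite !inE => /andP[yF /eqP fy].
  have := dev y; rewrite /prefers (outcome_assign_notin yF) /outcome_of fy ffunE.
  by rewrite (negbTE yF); apply.
(* The deviators X leave A and Y join it.  If |Y| <= |X|, all of X prefer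
   leaving A, forcing k > 0 at F; otherwise Y is a group joining A. *)
have [YX | XY] := leqP #|Y| #|X|.
- have X0 : X != set0.
    apply/negP => /eqP X0; apply: ne; apply/ffunP => i; rewrite ffunE.
    have Y0 : Y = set0 by apply/eqP; rewrite -cards_eq0 -leqn0; rewrite X0 cards0 in YX.
    case: ifP => iF; [move/setP: X0 | move/setP: Y0] => /(_ i); rewrite !inE iF /=;
      by case: (f i).
  have X_pos : 0 < #|X| by rewrite card_gt0.
  have : #|X| <= RA_k P F.
    apply: (RA_k_ge_group X0 XF) => x xX.
    by apply: (pref_monotone (monoP x) (devX x xX)); card_lia.
  by rewrite k0; card_lia.
- have Y0 : Y != set0 by rewrite -card_gt0; card_lia.
  by apply: (noF _ Y0 YF) => y yY; apply: (pref_monotone (monoP y) (devY y yY)); card_lia.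
Qed.

Lemma R_A_stable : stable P (R_A P).
Proof.
rewrite R_AE; apply: stable_at_fixpoint.
  by apply: RA_run_halts; rewrite cardsT card_ord.
by apply: RA_run_ind no_group_joins_A_setT _ => W k0 _; apply: no_group_joins_A_step.
Qed.

End Stability.

Section Deviation.

Variables (n : nat) (P P' : profile n) (U : {set 'I_n}) (g : assignment n).
Hypothesis monoP : monotonic_profile P.
Hypothesis agree : forall i, i \notin U -> P' i = P i.
Hypothesis stab : stable P' g.

Lemma A_community_step (W F : {set 'I_n}) :
  [set i | g i == A] \subset W -> RA_k P W != 0 -> F \subset W :\: RA_movers P W ->
  (forall u, u \in U -> prefers (P u) u g (assign_of F)) ->
  [set i | g i == A] \subset W :\: RA_movers P W.
Proof.
move=> GW k0 FW pref.
set GA := [set i | g i == A] in GW *; set Z := RA_movers P W :&: GA.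
suff Z0 : Z = set0.
  apply/subsetP => i iG; rewrite inE (subsetP GW i iG) andbT; apply/negP => iX.
  by move/setP: Z0 => /(_ i); rewrite in_setI iX iG inE.
have cardXW := subset_leq_card (RA_movers_sub P W).
have kX := RA_k_le_movers P W.
have cardW' := card_RA_remaining P W.
have cardF := subset_leq_card FW.
have cardGW := subset_leq_card GW.
have cardWn := card_set_le W.
have cardZG : #|Z| <= #|GA| by rewrite subset_leq_card ?subsetIr.
have cardGZ : #|GA| <= #|W :\: RA_movers P W| + #|Z|.
  rewrite -(cardsID (RA_movers P W) GA) setIC addnC leq_add2r subset_leq_card //.
  by apply: setSD.
have csizeA : csize g A = #|GA| by [].
have AB := csizeAB g.
have k_pos : 0 < RA_k P W by rewrite lt0n.
case: (eqVneq Z set0) => // Zn0; exfalso.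
have Z_pos : 0 < #|Z| by rewrite card_gt0.
have [u /andP[uZ uU] | honest] := pickP (fun u => (u \in Z) && (u \in U)).
- move: uZ; rewrite in_setI => /andP[uX]; rewrite inE => /eqP gu.
  have uF : u \notin F by apply: contraL uX => /(subsetP FW) /setDP[].
  move: (pref u uU); apply/negP.
  rewrite /prefers (outcome_assign_notin uF) /outcome_of gu.
  apply: (pref_asym (monoP u)); rewrite ?in_domE; try card_lia.
  by apply: (mover_prefers_B monoP k0 uX); card_lia.
- apply: (group_to_B_unstable Zn0 (subsetIr _ GA) _ stab) => z zZ.
  have zU : z \notin U by apply/negP => zU; move: (honest z); rewrite zZ zU.
  have zX : z \in RA_movers P W by move: zZ; rewrite in_setI => /andP[].
  by rewrite agree //; apply: (mover_prefers_B monoP k0 zX); card_lia.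
Qed.

Lemma A_community_sub_run fuel (W : {set 'I_n}) : [set i | g i == A] \subset W ->
  (forall u, u \in U -> prefers (P u) u g (assign_of (RA_run P fuel W))) ->
  [set i | g i == A] \subset RA_run P fuel W.
Proof.
move=> GW pref; apply: (@RA_run_ind _ _ (fun W => [set i | g i == A] \subset W) _ _ GW).
by move=> W' k0 sub GW'; apply: (A_community_step GW' k0 sub pref).
Qed.

Lemma A_community_sub_R_A : (forall u, u \in U -> prefers (P u) u g (R_A P)) ->
  forall i, g i = A -> R_A P i = A.
Proof.
move=> pref i gi; have := subsetP (A_community_sub_run (subsetT _) pref) i.
by rewrite R_AE ffunE !inE gi => ->.
Qed.

End Deviation.

Section Swap.

Variable n : nat.
Implicit Types (P : profile n) (f g : assignment n).

Definition swap_alt (S : alt) : alt := if S is A then B else A.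
Definition swap_outcome (x : outcome) : outcome := (swap_alt x.1, x.2).
Definition swap_profile P : profile n := fun i x y => P i (swap_outcome x) (swap_outcome y).
Definition swap_assignment f : assignment n := [ffun i => swap_alt (f i)].

Lemma swap_altK : involutive swap_alt.
Proof. by case. Qed.

Lemma swap_assignmentE f i : swap_assignment f i = swap_alt (f i).
Proof. by rewrite ffunE. Qed.

Lemma swap_outcomeK : involutive swap_outcome.
Proof. by case=> S j; rewrite /swap_outcome /= swap_altK. Qed.

Lemma swap_assignmentK : involutive swap_assignment.
Proof. by move=> f; apply/ffunP => i; rewrite !swap_assignmentE swap_altK. Qed.

Lemma monotonic_profile_swap P : monotonic_profile P -> monotonic_profile (swap_profile P).
Proof.
move=> monoP i; have [[irr trans total] grow] := monoP i; split; [split|].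
- by move=> x; apply: (irr (swap_outcome x)).
- by move=> x y z; apply: (trans (swap_outcome x) (swap_outcome y) (swap_outcome z)).
- move=> x y dx dy xy; apply: (total (swap_outcome x) (swap_outcome y)) => // exy; apply: xy.
  by rewrite -[x]swap_outcomeK exy swap_outcomeK.
- by move=> S j k; apply: (grow (swap_alt S)).
Qed.

Lemma outcome_of_swap f i : outcome_of (swap_assignment f) i = swap_outcome (outcome_of f i).
Proof.
rewrite /outcome_of /swap_outcome /csize ffunE /=; congr (_, _).
by apply: eq_card => j; rewrite !inE ffunE; case: (f i); case: (f j).
Qed.

Lemma prefers_swap P i f g :
  prefers (swap_profile P i) i (swap_assignment f) (swap_assignment g) = prefers (P i) i f g.
Proof.
rewrite /prefers /swap_profile !outcome_of_swap.
by case: (outcome_of f i) (outcome_of g i) => [S j] [T k]; rewrite /swap_outcome /= !swap_altK.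
Qed.

Lemma stable_swap P f : stable (swap_profile P) (swap_assignment f) <-> stable P f.
Proof.
have swap_neq f' g' i : (swap_assignment f' i != swap_assignment g' i) = (f' i != g' i).
  by rewrite !swap_assignmentE; case: (f' i); case: (g' i).
split=> stab [f' [ne dev]]; apply: stab; exists (swap_assignment f'); split.
- by move/(can_inj swap_assignmentK).
- by move=> i /eqP; rewrite swap_neq prefers_swap => /eqP /dev.
- by move=> e; apply: ne; rewrite -e swap_assignmentK.
- move=> i /eqP; rewrite -{1}(swap_assignmentK f) swap_neq => /eqP /dev pref.
  by rewrite -prefers_swap swap_assignmentK.
Qed.

End Swap.

Section Coalition.

Variables (n : nat) (P P' : profile n) (U : {set 'I_n}) (g : assignment n).
Hypothesis monoP : monotonic_profile P.
Hypothesis uniqP : unique_stable P.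
Hypothesis agree : forall i, i \notin U -> P' i = P i.
Hypothesis stab : stable P' g.
Hypothesis pref : forall u, u \in U -> prefers (P u) u g (R_A P).

Lemma R_A_swap_profile : R_A (swap_profile P) = swap_assignment (R_A P).
Proof.
have [f [_ uniq]] := uniqP.
have : stable P (swap_assignment (R_A (swap_profile P))).
  by rewrite -stable_swap swap_assignmentK; apply/R_A_stable/monotonic_profile_swap.
move/uniq => swap_f.
by rewrite -[LHS]swap_assignmentK swap_f (uniq _ (R_A_stable monoP)).
Qed.

Lemma stable_deviation_eq_R_A : g = R_A P.
Proof.
apply/ffunP => i; case gi: (g i).
  by rewrite (A_community_sub_R_A monoP agree stab pref gi).
have agree_s j : j \notin U -> swap_profile P' j = swap_profile P j.
  by move=> jU; rewrite /swap_profile agree.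
have stab_s : stable (swap_profile P') (swap_assignment g) by rewrite stable_swap.
have pref_s u : u \in U ->
    prefers (swap_profile P u) u (swap_assignment g) (R_A (swap_profile P)).
  by move=> uU; rewrite R_A_swap_profile prefers_swap; apply: pref.
have := A_community_sub_R_A (monotonic_profile_swap monoP) agree_s stab_s pref_s (i := i).
by rewrite R_A_swap_profile !swap_assignmentE gi; case: (R_A P i) => // /(_ erefl).
Qed.

End Coalition.

Unset Implicit Arguments.

Theorem theorem4 (n : nat) :
  group_strategyproof (@R_A n)
    (fun P : profile n => monotonic_profile P /\ unique_stable P).
Proof.
move=> P [monoP uniqP] [U [P' [U0 agree monoU pref]]].
have monoP' : monotonic_profile P'.
  by move=> i; case: (boolP (i \in U)) => iU; [exact: monoU | rewrite agree].
have R_A_eq := stable_deviation_eq_R_A monoP uniqP agree (R_A_stable monoP') pref.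
have [u uU] := set0Pn _ U0.
by move: (pref u uU); rewrite R_A_eq; apply/negP/(monotonic_irrefl (monoP u))/in_dom_outcome.
Qed.
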